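(* Let $r\geq 3$ and $k\geq 2$, and let $G$ be an $r$-graph that is $(rk-2k+2,k)$-free. Let $u,v$ be distinct vertices of $G$ and let $F_1,\dots,F_s\subseteq G$ be pairwise edge-disjoint subgraphs. Then the sumset $\sum_{i=1}^s C_{F_i}(uv)=\{\sum_{i=1}^s m_i : m_i\in C_{F_i}(uv)\}$ does not contain $k$.
   Context: An $r$-graph is an $r$-uniform hypergraph; subgraphs are identified with their edge sets. An $(s,k)$-configuration is an $r$-graph with exactly $k$ edges and at most $s$ vertices; $(s,k)$-free means containing no such subgraph. For an $r$-graph $F$ and distinct vertices $x,y$, $C_F(xy)$ is the set of integers $i\geq 0$ for which there exist $i$ distinct edges $X_1,\dots,X_i$ of $F$ with $|\{x,y\}\cup\bigcup_{j=1}^iX_j|\le ri-2i+2$ (so $0\in C_F(xy)$ always). *)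

From mathcomp Require Import all_boot.
Set Implicit Arguments. Unset Strict Implicit. Unset Printing Implicit Defensive.

(* Subgraphs are identified with their edge sets; the vertex set of a
   subgraph H is the union of its edges, [cover H]. *)
Definition is_rgraph (T : finType) (r : nat) (G : {set {set T}}) : Prop :=
  forall e, e \in G -> #|e| = r.

Definition sk_free (T : finType) (s k : nat) (G : {set {set T}}) : Prop :=
  ~ exists H : {set {set T}}, [/\ H \subset G, #|H| = k & #|cover H| <= s].

Definition inC (T : finType) (r : nat) (F : {set {set T}}) (x y : T) (i : nat) : Prop :=
  exists X : {set {set T}},
    [/\ X \subset F, #|X| = i & #|[set x; y] :|: cover X| <= r * i - 2 * i + 2].

From mathcomp Require Import all_boot zify.
Set Implicit Arguments. Unset Strict Implicit.

(* Choosing witnesses X_i for m_i \in C_{F_i}(uv), their union X is a set of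
   sum_i m_i edges of the union of the F_i (the X_i are disjoint because the F_i
   are), and every X_i adds at most (r - 2) m_i vertices to {u, v}.  So
   C_{F_1}(uv) + ... + C_{F_s}(uv) is contained in C_{F_1 ∪ ... ∪ F_s}(uv), and
   k \in C_F(uv) for F \subset G produces a (rk - 2k + 2, k)-configuration in G. *)

Section DisjointUnions.

Variables (I A : finType).
Implicit Types (B : {set A}) (X Y : I -> {set A}).

Lemma card_bigcup_disjoint X :
  (forall i j, i != j -> [disjoint X i & X j]) ->
  #|\bigcup_i X i| = \sum_i #|X i|.
Proof.
move=> disjX; have: uniq (index_enum I) := index_enum_uniq I.
elim: (index_enum I) => [|i r IHr] /=; first by rewrite !big_nil cards0.
case/andP=> i_notin_r /IHr{}IHr; rewrite !big_cons -IHr.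
have disj_i_r : [disjoint X i & \bigcup_(j <- r) X j].
  rewrite disjoint_sym disjoints_subset big_seq.
  apply: (big_ind (fun S : {set A} => S \subset ~: X i)).
  - exact: sub0set.
  - by move=> S1 S2 sub1 sub2; rewrite subUset sub1.
  move=> j j_in_r; rewrite -disjoints_subset disjoint_sym.
  by apply: disjX; apply: contraNneq i_notin_r => ->.
by rewrite -cardsUI (disjoint_setI0 disj_i_r) cards0 addn0.
Qed.

Lemma card_setU_bigcup_leq B Y (c : I -> nat) :
  (forall i, #|B :|: Y i| <= #|B| + c i) ->
  #|B :|: \bigcup_i Y i| <= #|B| + \sum_i c i.
Proof.
move=> leY; apply: (big_ind2 (fun S n => #|B :|: S| <= #|B| + n)) => //.
  by rewrite setU0 addn0.
move=> S1 n1 S2 n2 le1 le2.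
have -> : B :|: (S1 :|: S2) = (B :|: S1) :|: (B :|: S2) by rewrite setUACA setUid.
have leBI : #|B| <= #|(B :|: S1) :&: (B :|: S2)|.
  by apply: subset_leq_card; rewrite subsetI !subsetUl.
have := cardsUI (B :|: S1) (B :|: S2); lia.
Qed.

End DisjointUnions.

Lemma cover_bigcup (I T : finType) (X : I -> {set {set T}}) :
  cover (\bigcup_i X i) = \bigcup_i cover (X i).
Proof.
apply/setP=> x; apply/bigcupP/bigcupP => [[e /bigcupP[i _ Xie] xe] | [i _]].
  by exists i => //; apply/bigcupP; exists e.
by case/bigcupP=> e Xie xe; exists e => //; apply/bigcupP; exists i.
Qed.

Lemma inC_bigcup (T I : finType) (r : nat) (F : I -> {set {set T}})
    (x y : T) (m : I -> nat) :
  x != y -> (forall i j, i != j -> [disjoint F i & F j]) ->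
  (forall i, inC r (F i) x y (m i)) ->
  inC r (\bigcup_i F i) x y (\sum_i m i).
Proof.
move=> xy disjF /fin_all_exists[X XP].
have card_xy : #|[set x; y]| = 2 by rewrite cards2 xy.
exists (\bigcup_i X i); split.
- apply/bigcupsP=> i _; have [XF _ _] := XP i.
  exact: subset_trans XF (bigcup_sup i isT).
- rewrite card_bigcup_disjoint; first by apply: eq_bigr => i _; case: (XP i).
  move=> i j ij; have [XFi _ _] := XP i; have [XFj _ _] := XP j.
  exact: disjointWl XFi (disjointWr XFj (disjF i j ij)).
rewrite cover_bigcup.
apply: leq_trans (card_setU_bigcup_leq (c := fun i => r * m i - 2 * m i) _) _.
  by move=> i; case: (XP i) => _ _; rewrite card_xy; lia.
rewrite card_xy; under eq_bigr do rewrite -mulnBl.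
by rewrite -big_distrr /= mulnBl addnC.
Qed.

Lemma sk_free_notin_C (T : finType) (r k : nat) (G F : {set {set T}}) (x y : T) :
  F \subset G -> sk_free (r * k - 2 * k + 2) k G -> ~ inC r F x y k.
Proof.
move=> FG freeG [X [XF cardX leX]]; apply: freeG; exists X; split=> //.
  exact: subset_trans XF FG.
by apply: leq_trans leX; apply/subset_leq_card/subsetUr.
Qed.

Theorem lemma5p1 (T : finType) (r k : nat) (G : {set {set T}})
  (hr : 3 <= r) (hk : 2 <= k) (hG : is_rgraph r G)
  (hfree : sk_free (r * k - 2 * k + 2) k G)
  (u v : T) (huv : u != v)
  (s : nat) (F : 'I_s -> {set {set T}})
  (hF : forall i, F i \subset G)
  (hdisj : forall i j, i != j -> [disjoint F i & F j]) :
  ~ exists m : 'I_s -> nat,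
      (forall i, inC r (F i) u v (m i)) /\ \sum_(i < s) m i = k.
Proof.
move=> [m [hm sum_m]].
have unionFG : \bigcup_i F i \subset G by apply/bigcupsP=> i _; apply: hF.
apply: (sk_free_notin_C unionFG hfree).
by rewrite -sum_m; exact: inC_bigcup huv hdisj hm.
Qed.
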